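(* Let $q$ be a prime power, $e\ge 2$, $a\in\mathbb{F}_{q^e}^*$, and $\ell=q^{e-1}+\cdots+q+1$. Let $r$ and $s$ be positive integers with $r\equiv s\pmod{\ell}$. Suppose that $x^s(x^{q-1}+a)$ does not permute $\mathbb{F}_{q^e}$. If $\sum_{A\in S_{N,s}}\binom{N}{A}a^{N-A}\neq 0$ for some $N\in\{1,\dots,q^e-2\}$ with $q-1\mid N$, then $x^r(x^{q-1}+a)$ does not permute $\mathbb{F}_{q^e}$.
   Context: For a positive integer $t$ and an integer $N\ge 1$, $S_{N,t}=\{A\in\mathbb{Z}: A=\frac{j(q^e-1)-tN}{q-1}\text{ for some } j\in\mathbb{Z},\ 0\le A\le N\}$. Binomial coefficients are interpreted in $\mathbb{F}_{q^e}$. *)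

From HB Require Import structures.
From mathcomp Require Import all_boot all_order all_algebra all_field.
Set Implicit Arguments. Unset Strict Implicit. Unset Printing Implicit Defensive.
Import GRing.Theory.
Local Open Scope ring_scope.

(* A \in S_{N,t} (for q, e) : 0 <= A <= N and A = (j(q^e-1) - tN)/(q-1) for
   some integer j, i.e. (q-1) A = j (q^e - 1) - t N for some j : int,
   i.e. (q^e - 1) divides (q-1)A + tN in Z. *)
Definition inS (q e N t A : nat) : bool :=
  (A <= N)%N &&
  ((((q ^ e)%N)%:Z - 1) %| ((A%:Z) * ((q%:Z) - 1) + (t%:Z) * (N%:Z)))%Z.

Definition Ssum (F : fieldType) (q e N t : nat) (a : F) : F :=
  \sum_(0 <= A < N.+1 | inS q e N t A) ('C(N, A))%:R * a ^+ (N - A).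

Definition ell (q e : nat) : nat := (\sum_(i < e) q ^ i)%N.

From HB Require Import structures.
From mathcomp Require Import all_boot all_order all_algebra all_field.
From mathcomp Require Import fingroup cyclic zify ring.
(* Hermite's criterion: if f permutes a field of order Q, then
   sum_x f(x)^N = sum_x x^N = 0 for 0 < N < Q - 1.  For f = x^r (x^(q-1) + a),
   expanding f(x)^N binomially and using that sum_x x^m is -1 when Q - 1
   divides m > 0 and 0 otherwise turns this power sum into -Ssum q e N r a.
   As Q - 1 = (q - 1) ell and q - 1 divides N, rN = sN modulo Q - 1, so
   Ssum q e N r a = Ssum q e N s a, which is nonzero by hypothesis. *)

Set Implicit Arguments. Unset Strict Implicit. Unset Printing Implicit Defensive.
Import GRing.Theory FinRing.Theory.
Local Open Scope ring_scope.

Lemma mulrn_card (V : finZmodType) (x : V) : x *+ #|V| = 0.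
Proof. by rewrite -zmodXgE -cardsT (expg_cardG (G := [set: V]%G)) ?inE. Qed.

Lemma natr_pred_card (R : finNzRingType) : (#|R|.-1)%:R = -1 :> R.
Proof.
apply/eqP; rewrite -subr_eq0 opprK natr1 prednK ?mulrn_card //.
exact: ltnW (card_finNzRing_gt1 R).
Qed.

Section FinFieldPowerSums.

Variable F : finFieldType.

Lemma expf_card_pred (x : F) : x != 0 -> x ^+ #|F|.-1 = 1.
Proof.
move=> x_nz; apply: (mulIf x_nz); rewrite mul1r -exprSr prednK ?expf_card //.
exact: ltnW (finNzRing_gt1 F).
Qed.

Lemma exists_expf_neq1 m : ~~ (#|F|.-1 %| m)%N -> exists2 z : F, z != 0 & z ^+ m != 1.
Proof.
move=> ndvd; have /hasP[z] : has #|F|.-1.-primitive_root (enum [pred x : F | x != 0]).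
  apply: has_prim_root; last by rewrite -cardE cardC1.
  - by rewrite -subn1 subn_gt0 finNzRing_gt1.
  - by apply/allP => x; rewrite mem_enum inE => x_nz; rewrite unity_rootE expf_card_pred.
  - exact: enum_uniq.
by rewrite mem_enum inE => z_nz z_prim; exists z; rewrite // -(prim_order_dvd z_prim).
Qed.

Lemma sum_expr_finField m : (0 < m)%N ->
  \sum_(x : F) x ^+ m = if (#|F|.-1 %| m)%N then (#|F|.-1)%:R else 0.
Proof.
move=> m_gt0; case: ifPn => [m_dvd | /exists_expf_neq1[z z_nz zm_neq1]].
  rewrite (bigD1 0) //= expr0n (gtn_eqF m_gt0) add0r.
  rewrite (eq_bigr (fun _ => 1)) => [|x x_nz]; last first.
    by case/dvdnP: m_dvd => c ->; rewrite mulnC exprM expf_card_pred ?expr1n.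
  by rewrite sumr_const -(cardC1 (0 : F)); congr (_ *+ _); apply: eq_card => x; rewrite !inE.
have scaled : z ^+ m * \sum_(x : F) x ^+ m = \sum_(x : F) x ^+ m.
  rewrite mulr_sumr [RHS](reindex_inj (mulfI z_nz)) /=.
  by apply: eq_bigr => x _; rewrite exprMn.
apply/eqP; apply: contraR zm_neq1 => sum_nz; apply/eqP.
by apply: (mulIf sum_nz); rewrite mul1r.
Qed.

Lemma sum_expr_finField_eq0 m : (0 < m < #|F|.-1)%N -> \sum_(x : F) x ^+ m = 0.
Proof.
case/andP=> m_gt0 m_lt; rewrite sum_expr_finField //; case: ifP => // /(dvdn_leq m_gt0).
by rewrite leqNgt m_lt.
Qed.

Lemma sum_binomial_expr (r d N : nat) (a : F) : (0 < r)%N -> (0 < N)%N ->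
  \sum_(x : F) (x ^+ r * (x ^+ d + a)) ^+ N
    = - \sum_(0 <= i < N.+1 | (#|F|.-1 %| i * d + r * N)%N) 'C(N, i)%:R * a ^+ (N - i).
Proof.
move=> r_gt0 N_gt0.
under eq_bigr => x _ do rewrite exprMn -exprM addrC exprDn mulr_sumr.
rewrite exchange_big big_mkord -sumrN [RHS]big_mkcond /=; apply: eq_bigr => i _.
rewrite (eq_bigr (fun x => 'C(N, i)%:R * a ^+ (N - i) * x ^+ (i * d + r * N))).
  rewrite -mulr_sumr sum_expr_finField ?addn_gt0 ?muln_gt0 ?r_gt0 ?N_gt0 ?orbT //.
  by rewrite natr_pred_card; case: ifP => _; rewrite ?mulr0 ?oppr0 // mulrN1.
by move=> x _; rewrite -mulr_natl exprD -!exprM (mulnC i d); ring.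
Qed.

End FinFieldPowerSums.

Lemma inS_dvdn q e N t A : (0 < q)%N ->
  inS q e N t A = (A <= N)%N && (q ^ e - 1 %| A * (q - 1) + t * N)%N.
Proof.
move=> q_gt0; have qe_gt0 : (0 < q ^ e)%N by rewrite expn_gt0 q_gt0.
by rewrite /inS !subzn.
Qed.

Lemma inS_mod_ell q e N r s : (1 < q)%N -> (q - 1 %| N)%N ->
  r = s %[mod ell q e] -> inS q e N r =1 inS q e N s.
Proof.
move=> q_gt1 /dvdnP[c ->] rs A; rewrite !(inS_dvdn _ _ _ _ (ltnW q_gt1)).
have -> : (q ^ e - 1 = ell q e * (q - 1))%N by rewrite subn1 predn_exp mulnC subn1.
have tN_mod : (r * (c * (q - 1)) = s * (c * (q - 1)) %[mod ell q e * (q - 1)])%N.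
  by rewrite !mulnA -!(muln_modl (q - 1)) -modnMml rs modnMml.
by rewrite /dvdn -modnDmr tN_mod modnDmr.
Qed.

Lemma Ssum_mod_ell (F : fieldType) q e N r s (a : F) : (1 < q)%N -> (q - 1 %| N)%N ->
  r = s %[mod ell q e] -> Ssum q e N r a = Ssum q e N s a.
Proof. by move=> q_gt1 q1_dvd rs; apply: eq_bigl => A; rewrite (inS_mod_ell q_gt1 q1_dvd rs). Qed.

Lemma Ssum_eq0_of_bijective (F : finFieldType) q e N r (a : F) :
  (1 < q)%N -> #|F| = (q ^ e)%N -> (0 < r)%N -> (0 < N < q ^ e - 1)%N ->
  bijective (fun x : F => x ^+ r * (x ^+ (q - 1) + a)) -> Ssum q e N r a = 0.
Proof.
move=> q_gt1 cardF r_gt0 /andP[N_gt0 N_lt] f_bij.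
have card_pred : #|F|.-1 = (q ^ e - 1)%N by rewrite cardF subn1.
have := sum_binomial_expr (q - 1) a r_gt0 N_gt0.
have -> : \sum_(x : F) (x ^+ r * (x ^+ (q - 1) + a)) ^+ N = \sum_(x : F) x ^+ N.
  by rewrite [RHS](reindex_inj (bij_inj f_bij)).
rewrite sum_expr_finField_eq0; last by rewrite card_pred N_gt0.
move/(congr1 -%R); rewrite oppr0 opprK => sum0.
rewrite [RHS]sum0 /Ssum big_nat_cond [RHS]big_nat_cond; apply: eq_bigl => A.
rewrite card_pred inS_dvdn; last exact: ltnW.
by rewrite ltnS; case: (A <= N)%N.
Qed.

Theorem lemma2p3 (F : finFieldType) (p k q e : nat)
  (hp : prime p) (hk : (0 < k)%N) (hq : q = (p ^ k)%N)
  (he : (2 <= e)%N) (hF : #|F| = (q ^ e)%N)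
  (a : F) (ha : a != 0)
  (r s : nat) (hr : (0 < r)%N) (hs : (0 < s)%N)
  (hrs : r = s %[mod ell q e])
  (hnot : ~ bijective (fun x : F => x ^+ s * (x ^+ (q - 1) + a)))
  (hN : exists N : nat, [/\ (1 <= N)%N, (N <= q ^ e - 2)%N, (q - 1 %| N)%N
                           & Ssum q e N s a != 0]) :
  ~ bijective (fun x : F => x ^+ r * (x ^+ (q - 1) + a)).
Proof.
move=> f_bij; case: hN => N [N_gt0 N_le q1_dvd /eqP[]].
have q_gt1 : (1 < q)%N by rewrite hq -(expn0 p) ltn_exp2l ?prime_gt1.
have N_lt : (0 < N < q ^ e - 1)%N by rewrite N_gt0 /=; lia.
by rewrite -(Ssum_mod_ell a q_gt1 q1_dvd hrs) (Ssum_eq0_of_bijective q_gt1 hF hr N_lt f_bij).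
Qed.
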